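(* Let $n \ge 3$ and let $S$ be a $4$-cap free and $n$-cup free configuration with a fixed slope labeling $s$, and let $\alpha(p)=\alpha_1(p)$ and $\beta(p)=\alpha_2(p)$ be its $\alpha$-statistic. For any two distinct points $p, q$ with $\beta(p)=\beta(q)$: the edge joining $p$ and $q$ has label $1$, and $p<q$ if and only if $\alpha(p)<\alpha(q)$. For any two distinct points $p,q$ with $\alpha(p)=\alpha(q)$: the edge joining $p$ and $q$ has label $2$, and $p<q$ if and only if $\beta(p)<\beta(q)$.
   Context: A configuration is a finite set $S$ of points with a linear order $<$ and, for every $3$-element subset, an arbitrary assignment declaring it either a cap or a cup. Points $x_1<\cdots<x_a$ form an $a$-cup (resp. $a$-cap) if every consecutive triple $\{x_{i-1},x_i,x_{i+1}\}$, $1<i<a$, is assigned cup (resp. cap); $1$- and $2$-element sets are both caps and cups. The length of a cup is its number of points; a cup $x_1\cdots x_a$ with $a\ge 2$ ends with the point $x_a$ and the edge $x_{a-1}x_a$. An edge is a pair $x<y$, written $xy$. A slope labeling of a $4$-cap free configuration is an assignment $s(xy)\in\{1,2\}$ to every edge such that for any $x<y<z$, $s(xy)\le s(yz)$ implies $\{x,y,z\}$ is a $3$-cup. For $p\in S$, $\alpha(p)$ is the maximum length of a cup ending with $p$ and with an edge of label $1$ ($\alpha(p)=1$ if none), and $\beta(p)$ is the maximum length of a cup ending with $p$. *)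

From mathcomp Require Import all_boot.
Set Implicit Arguments. Unset Strict Implicit. Unset Printing Implicit Defensive.

(* A configuration on N points: the points are 'I_N with their natural
   (linear) order; [cupf x y z] (meaningful for x < y < z) says the triple
   {x,y,z} is a cup; otherwise it is a cap. *)
Section Config.
Variable N : nat.
Variable cupf : 'I_N -> 'I_N -> 'I_N -> bool.

Fixpoint cupchain (c : seq 'I_N) : bool :=
  match c with
  | x :: ((y :: z :: _) as r) => cupf x y z && cupchain r
  | _ => true
  end.
Fixpoint capchain (c : seq 'I_N) : bool :=
  match c with
  | x :: ((y :: z :: _) as r) => ~~ cupf x y z && capchain r
  | _ => true
  end.

Definition increasing (c : seq 'I_N) : bool := sorted (fun x y : 'I_N => x < y) c.

Definition is_cup (c : seq 'I_N) : bool := increasing c && cupchain c.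
Definition is_cap (c : seq 'I_N) : bool := increasing c && capchain c.

Definition cap_free (a : nat) : Prop := forall c, size c = a -> ~~ is_cap c.
Definition cup_free (a : nat) : Prop := forall c, size c = a -> ~~ is_cup c.

Definition slope_labeling (s : 'I_N -> 'I_N -> nat) : Prop :=
  (forall x y : 'I_N, x < y -> s x y = 1 \/ s x y = 2) /\
  (forall x y z : 'I_N, x < y -> y < z -> s x y <= s y z -> cupf x y z).

Definition edge_label (s : 'I_N -> 'I_N -> nat) (p q : 'I_N) : nat :=
  if p < q then s p q else s q p.

Definition cup_ending (p : 'I_N) (k : nat) : bool :=
  [exists t : k.-tuple 'I_N, is_cup t && (last p t == p) && (0 < k)].

Definition cup_ending1 (s : 'I_N -> 'I_N -> nat) (p : 'I_N) (k : nat) : bool :=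
  [exists t : k.-tuple 'I_N,
     [&& is_cup t, 1 < k, last p t == p & s (nth p t k.-2) p == 1]].

(* cups have length at most N, so maxima over k < N.+2 suffice *)
Definition beta (p : 'I_N) : nat :=
  \max_(k < N.+2 | cup_ending p k) k.
Definition alpha (s : 'I_N -> 'I_N -> nat) (p : 'I_N) : nat :=
  maxn 1 (\max_(k < N.+2 | cup_ending1 s p k) k).
End Config.

From mathcomp Require Import all_boot.
Set Implicit Arguments. Unset Strict Implicit. Unset Printing Implicit Defensive.

(* By the slope condition, a cup ending at p with last edge xp extends by any
   q > p with s x p <= s p q.  Hence an edge pq of label 2 lengthens every
   longest cup ending at p, and an edge of label 1 lengthens every longest cup
   ending at p whose last edge has label 1 (or the trivial cup [p]): beta
   strictly grows along label-2 edges and alpha along label-1 edges.  So two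
   points with equal beta are joined by a label-1 edge, along which alpha
   increases, and symmetrically for equal alpha. *)

Lemma nth_rcons_last (T : Type) (x : T) (c : seq T) :
  nth x (rcons c x) (size c).-1 = last x c.
Proof. by case: c => [|a c] //; rewrite nth_rcons ltnSn (nth_last x (a :: c)). Qed.

Section Cups.
Variable N : nat.
Variable cupf : 'I_N -> 'I_N -> 'I_N -> bool.

Lemma cupchain_rcons2 (c : seq 'I_N) x y z :
  cupchain cupf (x :: rcons (rcons c y) z) =
  cupchain cupf (x :: rcons c y) && cupf (last x c) y z.
Proof.
elim: c x => [|a c IHc] x /=; first by rewrite andbT.
case: c IHc => [|b c] IHc /=; first by rewrite !andbT.
by move: (IHc a) => /= ->; rewrite andbA.
Qed.

Lemma is_cup_rcons (c : seq 'I_N) (p q : 'I_N) :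
  is_cup cupf (rcons c p) -> p < q -> (c = [::] \/ cupf (last p c) p q) ->
  is_cup cupf (rcons (rcons c p) q).
Proof.
case: c => [|a c] /andP[sorted_cp chain_cp] pq; first by rewrite /is_cup /increasing /= pq.
case=> // cup_last; apply/andP; split; last by rewrite cupchain_rcons2 chain_cp.
by move: sorted_cp; rewrite /increasing /= !rcons_path last_rcons pq andbT.
Qed.

Lemma is_cup_last_lt (c : seq 'I_N) p :
  is_cup cupf (rcons c p) -> c != [::] -> last p c < p.
Proof.
by case: c => [|a c] // /andP[+ _] _; rewrite /increasing /= rcons_path => /andP[].
Qed.

Lemma size_cup (c : seq 'I_N) : is_cup cupf c -> size c <= N.
Proof.
case/andP=> sorted_c _.
have uniq_c : uniq c by apply: sorted_uniq sorted_c; [exact: ltn_trans | exact: ltnn].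
by rewrite -(card_uniqP uniq_c); apply: leq_trans (max_card _) _; rewrite card_ord.
Qed.

Lemma cup_ending_rcons (c : seq 'I_N) p :
  is_cup cupf (rcons c p) -> cup_ending cupf p (size (rcons c p)).
Proof.
move=> cup_cp; apply/existsP; exists (in_tuple (rcons c p)).
by rewrite /= cup_cp last_rcons eqxx size_rcons.
Qed.

Lemma cup_endingP p k :
  cup_ending cupf p k -> exists c, is_cup cupf (rcons c p) /\ size (rcons c p) = k.
Proof.
case/existsP=> -[t /= /eqP size_t] /andP[/andP[cup_t last_t] k_gt0].
case/lastP: t => [|c y] in size_t cup_t last_t *; first by rewrite -size_t in k_gt0.
by move: last_t; rewrite last_rcons => /eqP y_p; exists c; rewrite -y_p -size_t.
Qed.

Lemma leq_size_beta (c : seq 'I_N) p :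
  is_cup cupf (rcons c p) -> size (rcons c p) <= beta cupf p.
Proof.
move=> cup_cp; have size_lt : size (rcons c p) < N.+2 by rewrite ltnS leqW ?size_cup.
exact: (leq_bigmax_cond (Ordinal size_lt)) (cup_ending_rcons cup_cp).
Qed.

Lemma beta_attained p :
  exists c, is_cup cupf (rcons c p) /\ size (rcons c p) = beta cupf p.
Proof.
have [|k /cup_endingP[c [cup_cp size_cp]] max_k] :=
  @eq_bigmax_cond _ [pred k : 'I_N.+2 | cup_ending cupf p k] (@nat_of_ord _).
  by apply/card_gt0P; exists (@Ordinal N.+2 1 isT); exact: (@cup_ending_rcons [::]).
by exists c; rewrite /beta max_k.
Qed.

Variable s : 'I_N -> 'I_N -> nat.

Lemma cup_ending1_rcons (c : seq 'I_N) p :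
  c != [::] -> is_cup cupf (rcons c p) -> s (last p c) p = 1 ->
  cup_ending1 cupf s p (size (rcons c p)).
Proof.
move=> c_nil cup_cp last_label; apply/existsP; exists (in_tuple (rcons c p)).
rewrite /= cup_cp last_rcons size_rcons ltnS lt0n size_eq0 c_nil.
by rewrite nth_rcons_last last_label !eqxx.
Qed.

Lemma cup_ending1P p k :
  cup_ending1 cupf s p k ->
  exists c, [/\ is_cup cupf (rcons c p), s (last p c) p = 1 & size (rcons c p) = k].
Proof.
case/existsP=> -[t /= /eqP size_t] /and4P[cup_t k_gt1 last_t last_label].
case/lastP: t => [|c y] in size_t cup_t last_t last_label *; first by rewrite -size_t in k_gt1.
move: last_t; rewrite last_rcons => /eqP y_p; subst y; exists c; split=> //.
by move: last_label; rewrite -size_t size_rcons nth_rcons_last => /eqP.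
Qed.

Lemma leq_size_alpha (c : seq 'I_N) p :
  c != [::] -> is_cup cupf (rcons c p) -> s (last p c) p = 1 ->
  size (rcons c p) <= alpha cupf s p.
Proof.
move=> c_nil cup_cp last_label.
have size_lt : size (rcons c p) < N.+2 by rewrite ltnS leqW ?size_cup.
apply: leq_trans (leq_maxr 1 _).
exact: (leq_bigmax_cond (Ordinal size_lt)) (cup_ending1_rcons c_nil cup_cp last_label).
Qed.

Lemma alpha_attained p :
  exists c, [/\ is_cup cupf (rcons c p), c != [::] -> s (last p c) p = 1
              & size (rcons c p) = alpha cupf s p].
Proof.
case: (pickP [pred k : 'I_N.+2 | cup_ending1 cupf s p k]) => [k0 k0_end | no_end]; last first.
  by exists [::]; rewrite /alpha big_pred0.
have [|k /cup_ending1P[c [cup_cp last_label size_cp]] max_k] :=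
  @eq_bigmax_cond _ [pred k : 'I_N.+2 | cup_ending1 cupf s p k] (@nat_of_ord _).
  by apply/card_gt0P; exists k0.
exists c; split=> //.
rewrite /alpha max_k -size_cp; apply/esym/maxn_idPr.
by rewrite size_rcons.
Qed.

Hypothesis s_labeling : slope_labeling cupf s.

Lemma slope_le2 (x y : 'I_N) : x < y -> s x y <= 2.
Proof. by move/(s_labeling.1 x y) => [|] ->. Qed.

Lemma is_cup_rcons_slope (c : seq 'I_N) (p q : 'I_N) :
  is_cup cupf (rcons c p) -> p < q -> (c != [::] -> s (last p c) p <= s p q) ->
  is_cup cupf (rcons (rcons c p) q).
Proof.
move=> cup_cp pq label_le; apply: (is_cup_rcons cup_cp pq).
have [-> | c_nil] := eqVneq c [::]; [by left | right].
exact: s_labeling.2 (is_cup_last_lt cup_cp c_nil) pq (label_le c_nil).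
Qed.

Lemma beta_lt_slope2 (p q : 'I_N) : p < q -> s p q = 2 -> beta cupf p < beta cupf q.
Proof.
move=> pq label2; have [c [cup_cp <-]] := beta_attained p.
have cup_cpq : is_cup cupf (rcons (rcons c p) q).
  apply: (is_cup_rcons_slope cup_cp pq) => c_nil.
  by rewrite label2 slope_le2 ?(is_cup_last_lt cup_cp).
by have := leq_size_beta cup_cpq; rewrite size_rcons.
Qed.

Lemma alpha_lt_slope1 (p q : 'I_N) : p < q -> s p q = 1 -> alpha cupf s p < alpha cupf s q.
Proof.
move=> pq label1; have [c [cup_cp last_label <-]] := alpha_attained p.
have cup_cpq : is_cup cupf (rcons (rcons c p) q).
  by apply: is_cup_rcons_slope cup_cp pq _ => /last_label ->; rewrite label1.
have cp_nil : rcons c p != [::] by rewrite -size_eq0 size_rcons.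
by move: (leq_size_alpha cp_nil cup_cpq); rewrite last_rcons size_rcons; apply.
Qed.

Lemma slope1_of_beta_eq (p q : 'I_N) : p < q -> beta cupf p = beta cupf q -> s p q = 1.
Proof.
move=> pq beta_eq; case: (s_labeling.1 p q pq) => // /(beta_lt_slope2 pq).
by rewrite beta_eq ltnn.
Qed.

Lemma slope2_of_alpha_eq (p q : 'I_N) :
  p < q -> alpha cupf s p = alpha cupf s q -> s p q = 2.
Proof.
move=> pq alpha_eq; case: (s_labeling.1 p q pq) => // /(alpha_lt_slope1 pq).
by rewrite alpha_eq ltnn.
Qed.
End Cups.

Theorem corollary4p3 (N n : nat) (cupf : 'I_N -> 'I_N -> 'I_N -> bool)
  (s : 'I_N -> 'I_N -> nat) :
  3 <= n ->
  cap_free cupf 4 -> cup_free cupf n ->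
  slope_labeling cupf s ->
  forall p q : 'I_N, p != q ->
    (beta cupf p = beta cupf q ->
       edge_label s p q = 1 /\ (p < q <-> alpha cupf s p < alpha cupf s q)) /\
    (alpha cupf s p = alpha cupf s q ->
       edge_label s p q = 2 /\ (p < q <-> beta cupf p < beta cupf q)).
Proof.
move=> _ _ _ s_labeling p q p_neq_q; rewrite /edge_label.
have [pq | qp | /val_inj p_eq_q] := ltngtP p q; last by rewrite p_eq_q eqxx in p_neq_q.
  split=> [beta_eq | alpha_eq].
    have label1 := slope1_of_beta_eq s_labeling pq beta_eq.
    by split=> //; split=> // _; exact: (alpha_lt_slope1 s_labeling pq label1).
  have label2 := slope2_of_alpha_eq s_labeling pq alpha_eq.
  by split=> //; split=> // _; exact: (beta_lt_slope2 s_labeling pq label2).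
split=> [/esym beta_eq | /esym alpha_eq].
  have label1 := slope1_of_beta_eq s_labeling qp beta_eq.
  by rewrite label1 (leq_gtF (ltnW (alpha_lt_slope1 s_labeling qp label1))).
have label2 := slope2_of_alpha_eq s_labeling qp alpha_eq.
by rewrite label2 (leq_gtF (ltnW (beta_lt_slope2 s_labeling qp label2))).
Qed.
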